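(* Let $I$ be a finite set and let $T$ be a tree on $I$. For any subset $J \subseteq I$ there exists a unique tree $T_J$ on the leaf set $J$ such that $T_J \sqcup |_{I\setminus J} \leq T$ in the poset $\operatorname{For}(I)$.
   Context: A tree on a finite set $I$ is a (non-planar) rooted binary tree whose leaves are bijectively labeled by $I$: its vertices are inner vertices (of valence $3$) and leaves and the root (of valence $1$), and edges are oriented towards the root; a tree consisting of a single leaf (no inner vertices) is allowed. A forest on $I$ is a set of trees whose leaf sets form a partition of $I$; $\sqcup$ denotes disjoint union of forests. For forests $F,G$ on $I$, we set $F \leq G$ if there is a continuous (topological) map from $F$ to $G$ which (D1) is increasing with respect to the orientation towards the root, (D2) maps inner vertices to inner vertices injectively, (D3) restricts to the identity of $I$ on leaves, and (D4) is injective on each tree of $F$. This defines a poset $\operatorname{For}(I)$. For $J \subseteq I$, $|_J$ denotes the forest on $J$ with no inner vertices (each element of $J$ is a one-leaf tree). *)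

From mathcomp Require Import all_boot.
Set Implicit Arguments. Unset Strict Implicit. Unset Printing Implicit Defensive.

(* Encoding of forests.  A (non-planar, rooted, binary, leaf-labelled) forest *)
(* with leaf set J (a subset of the finite type I) is encoded by the set of   *)
(* its "clades": for every vertex v (leaf or inner vertex, not the root),     *)
(* the set of leaf labels below v.  Leaves are the singletons [set i];       *)
(* inner vertices are the clades with at least two elements; the tree order  *)
(* (towards the root) is inclusion; the trees of the forest are the maximal  *)
(* clades.  This is the standard bijection between isomorphism classes of    *)
(* such forests and families of clades satisfying the conditions below.      *)

Section Forests.
Variable I : finType.

Definition laminar (F : {set {set I}}) : Prop :=
  forall A B, A \in F -> B \in F ->
    [|| A \subset B, B \subset A | [disjoint A & B]].

Definition is_forest (J : {set I}) (F : {set {set I}}) : Prop :=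
  [/\ (forall A, A \in F -> A \subset J /\ A != set0),
      (forall i, i \in J -> [set i] \in F),
      laminar F &
      (forall A, A \in F -> 1 < #|A| ->
         exists B C, [/\ B \in F, C \in F, B != set0, C != set0 &
                         [disjoint B & C] /\ A = B :|: C])].

Definition is_tree (J : {set I}) (T : {set {set I}}) : Prop :=
  is_forest J T /\ J \in T.

(* |_K : the forest on K with no inner vertices. *)
Definition bars (K : {set I}) : {set {set I}} := [set [set i] | i in K].

Definition is_parent (F : {set {set I}}) (A B : {set I}) : Prop :=
  [/\ A \in F, B \in F, A \proper B &
      forall C, C \in F -> A \subset C -> C \subset B -> C = A \/ C = B].

Definition same_tree (F : {set {set I}}) (A A' : {set I}) : Prop :=
  exists T, [/\ T \in F, A \subset T & A' \subset T].

(* Cells of the geometric realisation: a vertex X, or the open edge leaving  *)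
(* the vertex X towards the root (to its parent, or the root half-edge).     *)
Inductive cell := Vtx of {set I} | Edg of {set I}.

Definition cell_base (c : cell) : {set I} :=
  match c with Vtx A => A | Edg A => A end.

(* The cells of the target forest G met by the image, under the continuous   *)
(* increasing map determined by the vertex map f, of a cell of F.  A non-root *)
(* edge A -> B is mapped onto the (unique, increasing) path from f A to f B;  *)
(* the root half-edge above a maximal clade A is mapped to an initial piece   *)
(* of the open edge above f A.                                               *)
Definition cell_img (F G : {set {set I}}) (f : {set I} -> {set I})
    (c d : cell) : Prop :=
  match c, d with
  | Vtx A, Vtx X => X = f A
  | Vtx _, Edg _ => False
  | Edg A, Vtx X =>
      exists B, [/\ is_parent F A B, X \in G, f A \proper X & X \proper f B]
  | Edg A, Edg X =>
      (exists B, [/\ is_parent F A B, X \in G, f A \subset X & X \proper f B])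
      \/ ((forall B, ~ is_parent F A B) /\ X = f A)
  end.

Definition is_cell (F : {set {set I}}) (c : cell) : Prop := cell_base c \in F.

Definition forest_le (F G : {set {set I}}) : Prop :=
  is_forest [set: I] F /\ is_forest [set: I] G /\
  exists f : {set I} -> {set I},
    [/\
        (forall A, A \in F -> f A \in G),
        (forall A B, A \in F -> B \in F -> A \subset B -> f A \subset f B),
        (forall A, A \in F -> 1 < #|A| -> 1 < #|f A|) &
        ((forall A B, A \in F -> B \in F -> 1 < #|A| -> 1 < #|B| ->
           f A = f B -> A = B) /\
        (forall i, f [set i] = [set i]) /\
        (forall c1 c2, is_cell F c1 -> is_cell F c2 ->
           same_tree F (cell_base c1) (cell_base c2) -> c1 <> c2 ->
           forall d, ~ (cell_img F G f c1 d /\ cell_img F G f c2 d)))]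
.

End Forests.

From mathcomp Require Import all_boot.
Set Implicit Arguments. Unset Strict Implicit. Unset Printing Implicit Defensive.

(* T_J is the restriction of T to J, whose clades are the nonempty sets      *)
(* A :&: J for A a clade of T; it embeds into T by sending each clade to its *)
(* least common ancestor in T.  Conversely, if S is a tree on J with an      *)
(* embedding f of S :|: bars (~: J) into T, injectivity on each tree (D4)    *)
(* forces f X :&: J = X for every clade X of S, so S is contained in the     *)
(* restriction; and a binary tree on J is maximal among laminar families of  *)
(* nonempty subsets of J, so the two coincide.                               *)

Section Families.
Variable I : finType.
Implicit Types (F S R : {set {set I}}) (A B C J V W X Y Z : {set I}).

Lemma forest_laminar J F : is_forest J F -> laminar F.
Proof. by case. Qed.

Lemma laminar_comparable F A B x :
  laminar F -> A \in F -> B \in F -> x \in A -> x \in B ->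
  (A \subset B) || (B \subset A).
Proof.
move=> lamF AF BF xA xB; case/or3P: (lamF A B AF BF) => [->|->|dAB] //.
  by rewrite orbT.
by rewrite (disjointFr dAB xA) in xB.
Qed.

Definition restr F J : {set {set I}} := [set A :&: J | A in F] :\ set0.

Lemma restrP F J B :
  reflect (B != set0 /\ exists2 A, A \in F & B = A :&: J) (B \in restr F J).
Proof.
rewrite in_setD1; apply: (iffP andP) => -[B0 HB]; split=> //; exact/imsetP.
Qed.

Lemma mem_restr F J A : A \in F -> A :&: J != set0 -> A :&: J \in restr F J.
Proof. by move=> AF AJ0; apply/restrP; split=> //; exists A. Qed.

Lemma restr_sub F J B : B \in restr F J -> B \subset J /\ B != set0.
Proof. by case/restrP=> B0 [A _ eB]; rewrite {1}eB subsetIr. Qed.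

Lemma restr_laminar F J : laminar F -> laminar (restr F J).
Proof.
move=> lamF _ _ /restrP[_ [A AF ->]] /restrP[_ [B BF ->]].
case/or3P: (lamF A B AF BF) => [sAB|sBA|dAB].
- by rewrite (setSI J sAB).
- by rewrite (setSI J sBA) orbT.
- by rewrite (disjointW (subsetIl _ _) (subsetIl _ _) dAB) !orbT.
Qed.

Lemma mem_setU_bars S J A :
  A \in S :|: bars (~: J) -> A \in S \/ exists2 k, k \notin J & A = [set k].
Proof.
case/setUP=> [|/imsetP[k]]; first by left.
by rewrite inE => kNJ ->; right; exists k.
Qed.

Lemma forest_setU_bars J S : is_forest J S -> is_forest setT (S :|: bars (~: J)).
Proof.
case=> cladeS leafS lamS binS; split.
- move=> A /mem_setU_bars[/cladeS[_ A0]|[k _ ->]]; first by rewrite subsetT.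
  by rewrite subsetT; split=> //; apply/set0Pn; exists k; rewrite inE.
- move=> i _; case: (boolP (i \in J)) => iJ; first by rewrite inE leafS.
  by rewrite inE [_ \in bars _]imset_f ?orbT // inE.
- have dis1 A k : A \in S -> k \notin J -> [disjoint A & [set k]].
    move=> /cladeS[AJ _] kNJ; rewrite disjoint_sym disjoints1.
    by apply: contra kNJ; apply: subsetP.
  move=> A B /mem_setU_bars[AS|[k kNJ ->]] /mem_setU_bars[BS|[l lNJ ->]].
  + exact: lamS.
  + by rewrite dis1 ?orbT.
  + by rewrite disjoint_sym dis1 ?orbT.
  + by rewrite disjoints1 inE; case: eqVneq => [->|]; rewrite ?subxx ?orbT.
- move=> A /mem_setU_bars[AS A1|[k _ -> ]]; last by rewrite cards1.
  have [B [C [BS CS B0 C0 BC]]] := binS A AS A1.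
  by exists B, C; split; rewrite // inE ?BS ?CS.
Qed.

Lemma exists_parent F W Z :
  W \in F -> Z \in F -> W \proper Z -> exists2 W', is_parent F W W' & W' \subset Z.
Proof.
move=> WF ZF WZ.
pose P V := [&& V \in F, W \proper V & V \subset Z].
have PZ : P Z by rewrite /P ZF WZ subxx.
have [W' /and3P[W'F WW' W'Z] minW'] := arg_minnP (fun V => #|V|) PZ.
exists W' => //; split=> // C CF WC CW'.
have [->|CneW] := eqVneq C W; [by left | right].
apply/eqP; rewrite eqEcard CW' minW' // /P CF properEneq eq_sym CneW WC.
exact: subset_trans CW' W'Z.
Qed.

Lemma cell_img_vtx_edg F R f A d :
  cell_img F R f (Vtx A) d -> cell_img F R f (Edg A) d -> False.
Proof. by case: d => X //= -> [B [_ _ ]]; rewrite properE subxx. Qed.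

(* Both children of the least clade of S above Y meet Y without containing it, *)
(* so laminarity of R puts them inside Y.                                     *)
Lemma binary_tree_maximal J S R :
  is_tree J S -> laminar R -> {subset S <= R} ->
  (forall Y, Y \in R -> Y \subset J /\ Y != set0) -> {subset R <= S}.
Proof.
move=> [[_ _ _ binS] JS] lamR SR cladeR Y YR; have [YJ Y0] := cladeR Y YR.
pose P Z := (Z \in S) && (Y \subset Z).
have PJ : P J by rewrite /P JS YJ.
have [Z /andP[ZS YZ] minZ] := arg_minnP (fun V => #|V|) PJ.
have [<-//|ZneY] := eqVneq Z Y.
have YZ' : Y \proper Z by rewrite properEneq eq_sym ZneY.
have [B [C [BS CS B0 C0 [dBC eZ]]]] :
    exists B C, [/\ B \in S, C \in S, B != set0, C != set0 &
                    [disjoint B & C] /\ Z = B :|: C].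
  by apply: binS ZS _; apply: leq_trans (proper_card YZ'); rewrite ltnS card_gt0.
have notin B' C' : B' \in S -> C' != set0 -> [disjoint B' & C'] ->
    Z = B' :|: C' -> ~~ (Y \subset B').
  move=> B'S C'0 dB'C' eZ'; apply/negP=> YB'.
  have := minZ B'; rewrite /P B'S YB' => /(_ isT) ZB'.
  have eB' : B' = Z by apply/eqP; rewrite eqEcard ZB' eZ' subsetUl.
  have [y yC'] := set0Pn _ C'0.
  have yB' : y \in B' by rewrite eB' eZ' inE yC' orbT.
  by rewrite (disjointFr dB'C' yB') in yC'.
have inside B' C' : B' \in S -> ~~ (Y \subset B') -> ~~ (Y \subset C') ->
    Z = B' :|: C' -> B' \subset Y.
  move=> B'S YNB' YNC' eZ'.
  case/or3P: (lamR _ _ YR (SR _ B'S)) => [YB'|//|dYB']; first by rewrite YB' in YNB'.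
  case/negP: YNC'; apply/subsetP=> y yY.
  have := subsetP YZ y yY; rewrite eZ' inE => /orP[yB'|//].
  by rewrite (disjointFr dYB' yY) in yB'.
have YNB := notin _ _ BS C0 dBC eZ.
have YNC : ~~ (Y \subset C) by rewrite (notin C B) // 1?disjoint_sym 1?setUC.
have BY := inside _ _ BS YNB YNC eZ.
have CY : C \subset Y by rewrite (inside C B) // setUC.
by move: YZ'; rewrite properE eZ subUset BY CY andbF.
Qed.

End Families.

Section LeastCommonAncestor.
Variables (I : finType) (T : {set {set I}}).
Hypotheses (lamT : laminar T) (rootT : setT \in T).
Implicit Types (A B J X Y : {set I}).

Definition lca X := [arg min_(A < setT | (A \in T) && (X \subset A)) #|A|].

Lemma lca_in X : lca X \in T.
Proof. by rewrite /lca; case: arg_minnP => [|A /andP[]//]; rewrite rootT subsetT. Qed.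

Lemma sub_lca X : X \subset lca X.
Proof. by rewrite /lca; case: arg_minnP => [|A /andP[]//]; rewrite rootT subsetT. Qed.

Lemma lca_min X A : X != set0 -> A \in T -> X \subset A -> lca X \subset A.
Proof.
move=> X0 AT XA; have [x xX] := set0Pn _ X0.
have xA := subsetP XA x xX; have xl := subsetP (sub_lca X) x xX.
case/orP: (laminar_comparable lamT (lca_in X) AT xl xA) => // AX.
rewrite /lca in AX *; case: arg_minnP AX => [|B _ minB AB].
  by rewrite rootT subsetT.
by have -> // : B = A; apply/eqP; rewrite eq_sym eqEcard AB minB ?AT.
Qed.

Lemma lca_mono X Y : X != set0 -> X \subset Y -> lca X \subset lca Y.
Proof. by move=> X0 XY; rewrite lca_min ?lca_in // (subset_trans XY (sub_lca Y)). Qed.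

Lemma lca_id A : A \in T -> lca A = A.
Proof.
move=> AT; apply/eqP; rewrite eq_sym eqEcard sub_lca /lca.
by case: arg_minnP => [|B _ ->]; rewrite ?AT ?rootT ?subsetT ?subxx.
Qed.

Lemma lca_restr J B : B \in restr T J -> lca B :&: J = B.
Proof.
move=> /[dup] /restr_sub[BJ B0] /restrP[_ [A AT eB]].
have BA : B \subset A by rewrite eB subsetIl.
apply/eqP; rewrite eqEsubset subsetI sub_lca BJ andbT.
by rewrite {2}eB setSI // lca_min.
Qed.

End LeastCommonAncestor.

Section Restriction.
Variables (I : finType) (T : {set {set I}}) (J : {set I}).
Hypotheses (forestT : is_forest setT T) (rootT : setT \in T).
Implicit Types (A B X : {set I}).

Let lamT := forest_laminar forestT.

(* A child of [lca T X] missing J would contain [X = lca T X :&: J], against *)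
(* the minimality of [lca T X].                                              *)
Lemma restr_binary X : X \in restr T J -> 1 < #|X| ->
  exists B C, [/\ B \in restr T J, C \in restr T J, B != set0, C != set0 &
                  [disjoint B & C] /\ X = B :|: C].
Proof.
move=> XR X1; have [_ X0] := restr_sub XR; have eX := lca_restr lamT rootT XR.
have [_ _ _ binT] := forestT.
have [B [C [BT CT B0 C0 [dBC eA]]]] := binT _ (lca_in rootT X)
  (leq_trans X1 (subset_leq_card (sub_lca rootT X))).
have child_meets B' C' : B' \in T -> C' \in T -> B' != set0 ->
    [disjoint B' & C'] -> lca T X = B' :|: C' -> B' :&: J != set0.
  move=> B'T C'T B'0 dB'C' eA'; apply: contra_neq B'0 => B'J0.
  have XC' : X \subset C' by rewrite -eX eA' setIUl B'J0 set0U subsetIl.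
  have := lca_min lamT rootT X0 C'T XC'; rewrite eA' subUset => /andP[B'C' _].
  by rewrite -(setIidPl B'C') (disjoint_setI0 dB'C').
have BJ0 := child_meets B C BT CT B0 dBC eA.
have CJ0 : C :&: J != set0.
  by apply: (child_meets C B) => //; [rewrite disjoint_sym | rewrite setUC].
exists (B :&: J), (C :&: J); split; rewrite ?mem_restr //.
split; first by rewrite (disjointW (subsetIl _ _) (subsetIl _ _) dBC).
by rewrite -setIUl -eA eX.
Qed.

Lemma restr_forest : is_forest J (restr T J).
Proof.
have [_ leafT _ _] := forestT.
split; [exact: restr_sub | | exact: restr_laminar | exact: restr_binary].
move=> i iJ; have -> : [set i] = [set i] :&: J by apply/esym/setIidPl; rewrite sub1set.
by rewrite mem_restr ?leafT //; apply/set0Pn; exists i; rewrite !inE eqxx.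
Qed.

Lemma restr_tree : J != set0 -> is_tree J (restr T J).
Proof.
by move=> J0; split; [exact: restr_forest | rewrite -{1}(setTI J) mem_restr // setTI].
Qed.

Local Notation F := (restr T J :|: bars (~: J)).

(* A left inverse of [lca T] on the cells of F: a clade of T met by the image *)
(* of a cell of F gives back the clade of that cell; clades missing J can    *)
(* only be images of bars.                                                   *)
Definition trace X : {set I} := if X :&: J == set0 then X else X :&: J.

Lemma parent_restr A B : is_parent F A B -> A \in restr T J /\ B \in restr T J.
Proof.
have [cladeF _ _ _] := forest_setU_bars restr_forest.
case=> AF BF AB _; have [_ A0] := cladeF A AF.
have BR : B \in restr T J.
  case/mem_setU_bars: BF => // -[k _ eB].
  by move: AB; rewrite eB properEneq subset1 (negPf A0) orbF andNb.
split=> //; case/mem_setU_bars: AF => // -[k kNJ eA].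
have [BJ _] := restr_sub BR.
by rewrite (subsetP BJ) ?(subsetP (proper_sub AB)) // eA set11 in kNJ.
Qed.

Lemma trace_lca A : A \in F -> trace (lca T A) = A.
Proof.
have [_ leafT _ _] := forestT.
case/mem_setU_bars => [AR|[k kNJ ->]].
  by rewrite /trace (lca_restr lamT rootT AR) (negPf (restr_sub AR).2).
by rewrite /trace lca_id ?leafT // disjoint_setI0 ?disjoints1 // eqxx.
Qed.

Lemma trace_edge A B X : is_parent F A B -> X \in T ->
  lca T A \subset X -> X \proper lca T B -> trace X = A.
Proof.
move=> parAB XT AX XB; have [AR BR] := parent_restr parAB.
have [_ _ AB minAB] := parAB; have [AJ A0] := restr_sub AR.
have AXJ : A \subset X :&: J.
  by rewrite subsetI AJ (subset_trans (sub_lca rootT A) AX).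
have XJ0 : X :&: J != set0.
  by have [a aA] := set0Pn _ A0; apply/set0Pn; exists a; apply: (subsetP AXJ).
have XJB : X :&: J \subset B.
  by rewrite -(lca_restr lamT rootT BR) setSI // proper_sub.
have XJF : X :&: J \in F by rewrite inE mem_restr.
case: (minAB _ XJF AXJ XJB) => eXJ; first by rewrite /trace (negPf XJ0) eXJ.
have BX : lca T B \subset X.
  by rewrite lca_min ?(restr_sub BR).2 // -eXJ subsetIl.
by move: XB; rewrite properE BX andbF.
Qed.

Lemma cell_img_trace c d : is_cell F c -> cell_img F T (lca T) c d ->
  trace (cell_base d) = cell_base c.
Proof.
case: c => A /= AF; case: d => X //=.
- by move=> ->; apply: trace_lca.
- by case=> B [parAB XT AX XB]; apply: (trace_edge parAB XT (proper_sub AX) XB).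
case=> [[B [parAB XT AX XB]]|[_ ->]]; first exact: (trace_edge parAB XT AX XB).
exact: trace_lca.
Qed.

Lemma restr_forest_le : forest_le F T.
Proof.
have forestF := forest_setU_bars restr_forest.
have [cladeF _ _ _] := forestF; have [_ leafT _ _] := forestT.
split=> //; split=> //; exists (lca T); split.
- by move=> A _; apply: lca_in.
- by move=> A B AF _; apply: lca_mono (cladeF A AF).2.
- by move=> A _ A1; apply: leq_trans A1 (subset_leq_card (sub_lca rootT A)).
split; first by move=> A B AF BF _ _ eAB; rewrite -(trace_lca AF) eAB trace_lca.
split; first by move=> i; rewrite lca_id ?leafT ?inE.
move=> c1 c2 c1F c2F _ c12 d [img1 img2].
have := etrans (esym (cell_img_trace c1F img1)) (cell_img_trace c2F img2).
case: c1 c2 c12 img1 img2 {c1F c2F} => A [] B /= c12 img1 img2 eAB; subst B => //.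
- exact: cell_img_vtx_edg img1 img2.
- exact: cell_img_vtx_edg img2 img1.
Qed.

End Restriction.

Section Embedding.
Variables (I : finType) (F G : {set {set I}}) (f : {set I} -> {set I}).
Hypotheses (forestF : is_forest setT F) (lamG : laminar G).
Hypothesis f_in : forall A, A \in F -> f A \in G.
Hypothesis f_mono :
  forall A B, A \in F -> B \in F -> A \subset B -> f A \subset f B.
Hypothesis f_inj_inner : forall A B, A \in F -> B \in F ->
  1 < #|A| -> 1 < #|B| -> f A = f B -> A = B.
Hypothesis f_set1 : forall i, f [set i] = [set i].
Hypothesis f_cells : forall c1 c2, is_cell F c1 -> is_cell F c2 ->
  same_tree F (cell_base c1) (cell_base c2) -> c1 <> c2 ->
  forall d, ~ (cell_img F G f c1 d /\ cell_img F G f c2 d).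
Implicit Types (A B V W X Z : {set I}).

Lemma sub_map V : V \in F -> V \subset f V.
Proof.
have [_ leafF _ _] := forestF; move=> VF; apply/subsetP=> x xV.
by rewrite -sub1set -(f_set1 x) f_mono ?leafF ?inE ?sub1set.
Qed.

Lemma map_inj : {in F &, injective f}.
Proof.
have [cladeF _ _ _] := forestF.
suff small A B : A \in F -> B \in F -> #|A| <= 1 -> f A = f B -> A = B.
  move=> A B AF BF fAB; case: (leqP #|A| 1) => [A1|A1]; first exact: small.
  by case: (leqP #|B| 1) => [B1|B1]; [exact/esym/small | exact: f_inj_inner].
move=> AF BF A1 fAB; have [_ A0] := cladeF A AF; have [_ B0] := cladeF B BF.
have /cards1P[a eA] : #|A| == 1 by rewrite eqn_leq A1 card_gt0.
have := sub_map BF; rewrite -fAB eA f_set1 subset1 (negPf B0) orbF.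
by move/eqP.
Qed.

(* If i \notin X, take W maximal with i \in W \subset Z and f W \subset f X: *)
(* the vertex f X then lies both on the image of the edge above W and at the *)
(* image of X, two distinct cells of the same tree.                          *)
Lemma mem_map_sub X Z i :
  X \in F -> Z \in F -> X \subset Z -> i \in Z -> i \in f X -> i \in X.
Proof.
have [_ leafF _ _] := forestF.
move=> XF ZF XZ iZ ifX; apply/negPn/negP=> iNX.
pose P W := [&& W \in F, i \in W, W \subset Z & f W \subset f X].
have Pi : P [set i] by rewrite /P leafF ?inE ?eqxx //= sub1set iZ f_set1 sub1set.
have [W /and4P[WF iW WZ fWX] maxW] := arg_maxnP (fun W => #|W|) Pi.
have fWneX : f W != f X by apply: contraNneq iNX => /(map_inj WF XF) <-.
have WZ' : W \proper Z.
  rewrite properEneq WZ andbT; apply: contra_neq fWneX => eWZ.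
  by apply/eqP; rewrite eqEsubset fWX eWZ f_mono.
have [W' parW W'Z] := exists_parent WF ZF WZ'; have [_ W'F WW' _] := parW.
have iW' : i \in W' := subsetP (proper_sub WW') i iW.
have fW'NX : ~~ (f W' \subset f X).
  apply/negP=> fW'X; have := maxW W'; rewrite /P W'F iW' W'Z fW'X.
  by move=> /(_ isT) /(leq_trans (proper_card WW')); rewrite ltnn.
have fXW' : f X \proper f W'.
  have ifW' := subsetP (sub_map W'F) i iW'.
  case/orP: (laminar_comparable lamG (f_in XF) (f_in W'F) ifX ifW') => sub.
    by rewrite properE sub.
  by rewrite sub in fW'NX.
apply: (f_cells (c1 := Vtx X) (c2 := Edg W) XF WF _ _ (d := Vtx (f X))) => //=.
  by exists Z.
split=> //; exists W'; split=> //; first exact: f_in.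
by rewrite properEneq fWneX.
Qed.

End Embedding.

Lemma forest_le_sub_restr (I : finType) (T S : {set {set I}}) (J : {set I}) :
  is_tree J S -> forest_le (S :|: bars (~: J)) T -> {subset S <= restr T J}.
Proof.
move=> [forestS JS] [forestF [[_ _ lamT _] [f [f_in f_mono _ ]]]].
case=> f_inj [f_set1 f_cells].
have [cladeS _ _ _] := forestS.
have inF A : A \in S -> A \in S :|: bars (~: J) by move=> AS; rewrite inE AS.
move=> X XS; have [XJ _] := cladeS X XS.
have eX : f X :&: J = X.
  have XfX := sub_map forestF f_mono f_set1 (inF X XS).
  apply/eqP; rewrite eqEsubset subsetI XfX XJ !andbT; apply/subsetP=> i /setIP[ifX iJ].
  exact: (mem_map_sub forestF lamT f_in f_mono f_inj f_set1 f_cells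
            (inF X XS) (inF J JS) XJ iJ ifX).
by rewrite -eX mem_restr ?f_in ?inF // eX (cladeS X XS).2.
Qed.

Theorem lemma3p2 (I : finType) (T : {set {set I}}) (J : {set I}) :
  is_tree [set: I] T -> J != set0 ->
  exists! TJ : {set {set I}},
    is_tree J TJ /\ forest_le (TJ :|: bars (~: J)) T.
Proof.
move=> [forestT rootT] J0; exists (restr T J); split.
  by split; [exact: restr_tree | exact: restr_forest_le].
move=> S [treeS leS]; have SR := forest_le_sub_restr treeS leS.
have RS : {subset restr T J <= S}.
  apply: (binary_tree_maximal treeS _ SR); last exact: restr_sub.
  exact: restr_laminar (forest_laminar forestT).
by apply/setP=> X; apply/idP/idP => [/RS|/SR].
Qed.
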